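(* Under the hypotheses of the ratio-version correlator cluster expansion, $$\langle O_AO_B\rangle_c=\langle O_A\rangle\langle O_B\rangle\left[\exp\Bigg\{\sum_{\substack{\Gamma\subseteq\mathcal L_{AB}\text{ finite},\ G_\Gamma\text{ connected}\\ \mathrm{supp}(\Gamma)\cap A\ne\emptyset,\ \mathrm{supp}(\Gamma)\cap B\ne\emptyset}}\big(\mathfrak K^{AB}(\Gamma)+\mathfrak K(\Gamma)-\mathfrak K^{A}(\Gamma)-\mathfrak K^{B}(\Gamma)\big)\Bigg\}-1\right],$$ where $\mathfrak K^X(\Gamma):=\sum_{\mathbf W\text{ connected},\ \text{loop-set}(\mathbf W)=\Gamma}\phi(\mathbf W)Z^X_{\mathbf W}$ for $X\in\{\emptyset,A,B,AB\}$, $\mathfrak K=\mathfrak K^\emptyset$.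
   Context: Let $|\psi\rangle$ be a PEPS on a finite graph $G=(V,E)$; $A,B\subseteq V$ disjoint, $O_A,O_B$ operators on the physical sites of $A$, $B$. $\mathcal Z=\mathcal Z^\emptyset=\langle\psi|\psi\rangle>0$; $\mathcal Z^X$ for $X=A,B,AB$ is the network for $\langle\psi|O_X|\psi\rangle$ with $O_{AB}=O_AO_B$; $\langle O_X\rangle=\mathcal Z^X/\mathcal Z$, $\langle O_AO_B\rangle_c=\langle O_AO_B\rangle-\langle O_A\rangle\langle O_B\rangle$. A BP fixed point of $\mathcal Z$ (messages $\mu_{v\to w}$, $I_{vw}=\mu_{v\to w}\star\mu_{w\to v}\ne0$, vertex tensor contracted with all incoming messages but one proportional to the outgoing one) is used for all networks; $\mathcal P^\perp_{vw}=\mathbb 1-\mu_{v\to w}\otimes\mu_{w\to v}/I_{vw}$. $\tilde Z^X_F$: contraction of $\mathcal Z^X$ with $\mathcal P^\perp$ on edges of $F$, $\mu\otimes\mu/I$ elsewhere; $Z^X_{BP}=\tilde Z^X_\emptyset$. $\mathcal L_{AB}$: connected subgraphs with at least one edge in which every vertex outside $A\cup B$ has degree $\ge2$; weights $Z^X_l=\tilde Z^X_{E(l)}/Z^X_{BP}$; supports are vertex sets; compatible = vertex-disjoint. Clusters $\mathbf W=\{(l_i,\eta_i)\}$ over $\mathcal L_{AB}$, $Z^X_{\mathbf W}=\prod(Z^X_{l_i})^{\eta_i}$, loop-set$(\mathbf W)=\{l_i\}$; interaction graph: $\eta_i$ vertices per $l_i$, adjacent iff equal or incompatible; connected if connected;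 $G_\Gamma$ is the interaction graph of $\{(l,1)\}_{l\in\Gamma}$, $\mathrm{supp}(\Gamma)=\bigcup_{l\in\Gamma}\mathrm{supp}(l)$. Ursell function $\phi(\mathbf W)=\frac1{\prod\eta_i!}\sum_C(-1)^{|E(C)|}$ over connected spanning subgraphs of the interaction graph. The ratio-version correlator expansion hypotheses: $Z^X_{BP}\ne0$, $\langle O_A\rangle,\langle O_B\rangle\ne0$, and absolutely convergent cluster expansions $\log\mathcal Z^X=\log Z^X_{BP}+\sum_{\mathbf W\text{ conn.}}\phi(\mathbf W)Z^X_{\mathbf W}$ over $\mathcal L_{AB}$ for all $X\in\{\emptyset,A,B,AB\}$. *)

From HB Require Import structures.
From mathcomp Require Import all_boot all_order all_algebra.
From mathcomp Require Import boolp reals.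
From mathcomp Require classical_sets.
From mathcomp.analysis Require Import sequences exp trigo.
From mathcomp Require Import complex.

Set Implicit Arguments.
Unset Strict Implicit.
Unset Printing Implicit Defensive.

Import Order.TTheory GRing.Theory Num.Theory.
Local Open Scope ring_scope.

Section ComplexAnalysis.
Variable R : realType.
Local Notation C := R[i].

Definition expC (z : C) : C :=
  (expR (complex.Re z))%:C%C * ((cos (complex.Im z)) +i* (sin (complex.Im z)))%C.

(* [has_sum f S]: the (possibly infinite) family (f x)_{x : T} sums to S in the
   sense of nets of finite partial sums (unconditional convergence). *)
Definition has_sum (T : eqType) (f : T -> C) (S : C) : Prop :=
  forall eps : R, 0 < eps -> exists F0 : seq T,
    forall F : seq T, uniq F -> {subset F0 <= F} ->
      `| \sum_(x <- F) f x - S | < eps%:C%C.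

Definition abs_summable (T : eqType) (f : T -> C) : Prop :=
  exists M : R, forall F : seq T, uniq F -> \sum_(x <- F) `| f x | <= M%:C%C.

(* the value of the sum (the unique S with has_sum f S, if any; 0 otherwise) *)
Definition csum (T : eqType) (f : T -> C) : C := classical_sets.xget 0 (fun S => has_sum f S).

End ComplexAnalysis.

Section PEPS.
Variable R : realType.
Local Notation C := R[i].

(* The finite graph G = (V, E): every edge e has two distinct end points
   src e, tgt e (the orientation is only a bookkeeping device). *)
Variables (V E : finType) (src tgt : E -> V).

Definition simple_graph : Prop :=
  (forall e, src e != tgt e) /\
  (forall e e', [set src e; tgt e] = [set src e'; tgt e'] -> e = e').

Definition incident (v : V) (e : E) : bool := (src e == v) || (tgt e == v).

(* virtual (bond) index space of each edge, physical space of each site *)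
Variables (I : E -> finType) (P : V -> finType).

Definition vconf := {dffun forall e : E, I e}.
Definition pconf := {dffun forall v : V, P v}.

(* The PEPS tensor at v: T v s x, with s the physical index and x an
   assignment of virtual indices; locality says it only depends on the
   indices of the edges incident to v. *)
Definition peps_tensors := forall v : V, P v -> vconf -> C.

Definition is_local (T : peps_tensors) : Prop :=
  forall v s (x y : vconf), (forall e, incident v e -> x e = y e) ->
    T v s x = T v s y.

(* Operators on the physical Hilbert space: matrices indexed by physical
   configurations, Op s' s = <s'| Op |s>. *)
Definition operator := pconf -> pconf -> C.

Definition op_id : operator := fun s' s => (s' == s)%:R.
Definition op_mul (O1 O2 : operator) : operator :=
  fun s' s => \sum_(t : pconf) O1 s' t * O2 t s.

(* Op acts on the physical sites of X only: Op = O_X (x) 1_{V \ X}. *)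
Definition supported_on (X : {set V}) (Op : operator) : Prop :=
  (forall s' s : pconf, (exists2 v, v \notin X & s' v != s v) -> Op s' s = 0) /\
  (forall s' s t' t : pconf,
     (forall v, v \in X -> s' v = t' v /\ s v = t v) ->
     (forall v, v \notin X -> s' v = s v /\ t' v = t v) ->
     Op s' s = Op t' t).

(* In the double-layer network each edge e carries a ket index and a bra index;
   cutting the edge, the src-side (aS,bS) and tgt-side (aT,bT) index pairs are
   joined by an inserted matrix M e (aS,bS) (aT,bT). *)
Definition edge_insertion := forall e : E, I e -> I e -> I e -> I e -> C.

Definition ins_id : edge_insertion :=
  fun e aS bS aT bT => ((aS == aT) && (bS == bT))%:R.
Arguments ins_id : clear implicits.

Definition side (v : V) (xS xT : vconf) : vconf :=
  [ffun e : E => if src e == v then xS e else xT e].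

(* contraction of the network <psi| Op |psi> with matrices M inserted on edges *)
Definition contract (T : peps_tensors) (Op : operator) (M : edge_insertion) : C :=
  \sum_(s' : pconf) \sum_(s : pconf)
  \sum_(kS : vconf) \sum_(kT : vconf) \sum_(bS : vconf) \sum_(bT : vconf)
    Op s' s
    * (\prod_(v : V) ((T v (s' v) (side v bS bT))^*)%C)
    * (\prod_(v : V) T v (s v) (side v kS kT))
    * (\prod_(e : E) M e (kS e) (bS e) (kT e) (bT e)).

Definition Znet (T : peps_tensors) (Op : operator) : C := contract T Op ins_id.

Definition expval (T : peps_tensors) (Op : operator) : C :=
  Znet T Op / Znet T op_id.

Definition correlator (T : peps_tensors) (OA OB : operator) : C :=
  expval T (op_mul OA OB) - expval T OA * expval T OB.

(* BP messages: mu e true = mu_{src e -> tgt e}, mu e false = mu_{tgt e -> src e};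
   a message is a vector on the doubled bond space (ket index, bra index). *)
Definition messages := forall e : E, bool -> I e -> I e -> C.

Definition Imsg (mu : messages) (e : E) : C :=
  \sum_(a : I e) \sum_(b : I e) mu e true a b * mu e false a b.

(* message arriving at v along e' *)
Definition incoming (mu : messages) (v : V) (e' : E) : I e' -> I e' -> C :=
  mu e' (src e' != v).
Arguments incoming mu v e' : clear implicits.

(* the double-layer vertex tensor of Z at v, contracted with all incoming
   messages except along e; the result is a vector on the doubled bond of e.
   (The sum runs over full virtual configurations, so the result carries the
   harmless positive factor prod_{e'' not incident to v} |I e''|^2, which does
   not affect proportionality.) *)
Definition bp_out (T : peps_tensors) (mu : messages) (v : V) (e : E)
    (a b : I e) : C :=
  \sum_(sv : P v) \sum_(k : vconf | k e == a) \sum_(k' : vconf | k' e == b)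
    T v sv k * ((T v sv k')^*)%C
    * \prod_(e' : E | incident v e' && (e' != e)) incoming mu v e' (k e') (k' e').
Arguments bp_out T mu v e a b : clear implicits.

Definition bp_fixed_point (T : peps_tensors) (mu : messages) : Prop :=
  (forall e, Imsg mu e != 0) /\
  (forall e (dir : bool), exists lam : C, forall a b,
     bp_out T mu (if dir then src e else tgt e) e a b = lam * mu e dir a b).

(* mu_{v->w} (x) mu_{w->v} / I_vw, oriented so that the message arriving at
   each end point is contracted with that end point's tensor *)
Definition Pbp (mu : messages) : edge_insertion :=
  fun e aS bS aT bT => mu e false aS bS * mu e true aT bT / Imsg mu e.
Arguments Pbp : clear implicits.

Definition Pperp (mu : messages) : edge_insertion :=
  fun e (aS bS aT bT : I e) => ins_id e aS bS aT bT - Pbp mu e aS bS aT bT.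
Arguments Pperp : clear implicits.

Definition Ztilde (T : peps_tensors) (mu : messages) (Op : operator)
    (F : {set E}) : C :=
  contract T Op (fun e => if e \in F then Pperp mu e else Pbp mu e).

Definition ZBP T mu Op : C := Ztilde T mu Op set0.

(* a subgraph with at least one edge is represented by its edge set l *)

Definition supp (l : {set E}) : {set V} := [set v | [exists e in l, incident v e]].

Definition deg (l : {set E}) (v : V) : nat := #|[set e in l | incident v e]|.

Definition ladj (l : {set E}) : rel V := fun v w =>
  [exists e in l, ((src e == v) && (tgt e == w)) || ((src e == w) && (tgt e == v))].

Definition is_loop (SA SB : {set V}) (l : {set E}) : bool :=
  [&& l != set0,
      [forall v in supp l, forall w in supp l, connect (ladj l) v w] &
      [forall v in supp l, (v \notin SA :|: SB) ==> (2 <= deg l v)%N]].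

Definition compatible (l l' : {set E}) : bool := [disjoint supp l & supp l'].

Definition Zloop T mu Op (l : {set E}) : C := Ztilde T mu Op l / ZBP T mu Op.

(* a cluster W = {(l_i, eta_i)} is encoded by its multiplicity function;
   W l = 0 means l does not occur. *)
Definition cluster := {ffun {set E} -> nat}.

Definition is_cluster (SA SB : {set V}) (W : cluster) : Prop :=
  (forall l, 0 < W l -> is_loop SA SB l)%N /\ (exists l, 0 < W l)%N.

Definition loopset (W : cluster) : {set {set E}} := [set l | 0 < W l]%N.

(* vertices of the interaction graph: eta_i copies (l_i, j), j < eta_i *)
Definition ivert (W : cluster) := {l : {set E} & 'I_(W l)}.

Definition iadj (W : cluster) : rel (ivert W) := fun x y =>
  (x != y) && ((tag x == tag y) || ~~ compatible (tag x) (tag y)).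
Arguments iadj : clear implicits.

Definition cluster_connected (W : cluster) : bool :=
  [forall x : ivert W, forall y : ivert W, connect (iadj W) x y].

Definition iedges (W : cluster) : {set {set ivert W}} :=
  [set p | [exists x, exists y, (p == [set x; y]) && iadj W x y]].

Definition conn_spanning (W : cluster) (Cs : {set {set ivert W}}) : bool :=
  (Cs \subset iedges W) &&
  [forall x, forall y, connect (fun u v => [set u; v] \in Cs) x y].

Definition ursell (W : cluster) : C :=
  (\prod_(l : {set E}) ((W l)`!)%:R)^-1
  * \sum_(Cs : {set {set ivert W}} | conn_spanning Cs) (-1) ^+ #|Cs|.

Definition Zcluster T mu Op (W : cluster) : C :=
  \prod_(l : {set E}) (Zloop T mu Op l) ^+ (W l).

Definition cl_term SA SB T mu Op (W : cluster) : C :=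
  if pselect (is_cluster SA SB W /\ cluster_connected W)
  then ursell W * Zcluster T mu Op W else 0.

(* hypothesis: absolutely convergent cluster expansion
   log Z^X = log Z^X_BP + sum_{W connected} phi(W) Z^X_W,
   read (without choice of branch of log) as Z^X = Z^X_BP exp(sum ...) *)
Definition cluster_expansion SA SB T mu Op : Prop :=
  abs_summable (cl_term SA SB T mu Op) /\
  Znet T Op = ZBP T mu Op * expC (csum (cl_term SA SB T mu Op)).

Definition Kfrak SA SB T mu Op (Gam : {set {set E}}) : C :=
  csum (fun W : cluster =>
          if loopset W == Gam then cl_term SA SB T mu Op W else 0).

Definition gamma_connected (Gam : {set {set E}}) : bool :=
  [forall l in Gam, forall l' in Gam,
     connect (fun x y => [&& x \in Gam, y \in Gam, x != y & ~~ compatible x y])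
             l l'].

Definition suppG (Gam : {set {set E}}) : {set V} := \bigcup_(l in Gam) supp l.

Definition gamma_ok SA SB (Gam : {set {set E}}) : bool :=
  [&& [forall l in Gam, is_loop SA SB l], gamma_connected Gam,
      suppG Gam :&: SA != set0 & suppG Gam :&: SB != set0].

End PEPS.

From HB Require Import structures.
From mathcomp Require Import all_boot all_order all_algebra.
From mathcomp Require Import boolp reals complex.
From mathcomp Require classical_sets.
From mathcomp.analysis Require Import exp trigo.
From mathcomp Require Import ring lra.
Import Order.TTheory GRing.Theory Num.Theory.
Local Open Scope ring_scope.

Set Implicit Arguments.
Unset Strict Implicit.
Unset Printing Implicit Defensive.

(* The BP projector mu (x) mu / I is a product over each edge. Hence, if U
   contains the support of one operator and the P-perp insertions sit on edges
   away from U, the double-layer network splits into a U-part and a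
   complementary part, and exchanging the U-parts of two such networks gives
   Z^AB_BP Z_BP = Z^A_BP Z^B_BP and, for every loop l missing A,
   Z^AB_l = Z^B_l and Z^A_l = Z_l (symmetrically for B). So a connected cluster
   whose loops all miss A, or all miss B, contributes nothing to
   K^AB + K - K^A - K^B. Regrouping the four absolutely convergent cluster
   expansions by loop-set, the exponent of Z^AB Z / (Z^A Z^B) is the sum over the
   loop-sets touching both A and B, and
   <O_A O_B>_c = <O_A><O_B> (Z^AB Z / (Z^A Z^B) - 1). *)

Section UnconditionalSums.
Variable R : realType.
Local Notation C := R[i].

Lemma normC_real (r : R) : `|r%:C%C : C| = `|r|%:C%C.
Proof. by rewrite normc_def /= expr0n addr0 sqrtr_sqr. Qed.

Lemma normC_Re (z : C) : `|z| = (complex.Re `|z|)%:C%C.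
Proof. by rewrite normc_def. Qed.

Lemma normC_lt_eq0 (z : C) : (forall e : R, 0 < e -> `|z| < e%:C%C) -> z = 0.
Proof.
move=> small; apply/normr0_eq0; apply/eqP; rewrite eq_le normr_ge0 andbT.
rewrite normC_Re lecR leNgt; apply/negP => z_gt0.
by have := small _ z_gt0; rewrite -normC_Re ltxx.
Qed.

Lemma splitC (e : R) : e%:C%C = (e / 2)%:C%C + (e / 2)%:C%C :> C.
Proof. by rewrite -rmorphD /= -splitr. Qed.

Variable T : eqType.
Implicit Types (f g : T -> C) (S : C).

Lemma has_sum_unique f S1 S2 : has_sum f S1 -> has_sum f S2 -> S1 = S2.
Proof.
move=> sum1 sum2; apply/eqP; rewrite -subr_eq0; apply/eqP.
apply: normC_lt_eq0 => e e_gt0; have e2_gt0 : 0 < e / 2 by rewrite divr_gt0.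
have [F1 near1] := sum1 _ e2_gt0; have [F2 near2] := sum2 _ e2_gt0.
set F := undup (F1 ++ F2).
have sub1 : {subset F1 <= F} by move=> x; rewrite mem_undup mem_cat => ->.
have sub2 : {subset F2 <= F} by move=> x; rewrite mem_undup mem_cat orbC => ->.
have := near1 _ (undup_uniq _) sub1; have := near2 _ (undup_uniq _) sub2.
set s := \sum_(x <- _) _ => lt2 lt1.
have -> : S1 - S2 = (s - S2) - (s - S1) by ring.
by rewrite splitC; apply: le_lt_trans (ler_normB _ _) (ltrD lt2 lt1).
Qed.

Lemma eq_has_sum f g S : f =1 g -> has_sum f S -> has_sum g S.
Proof. by move/funext->. Qed.

Lemma has_sum0 : has_sum (fun _ : T => 0 : C) 0.
Proof. by move=> e e_gt0; exists [::] => F _ _; rewrite big1 // subr0 normr0 ltcR. Qed.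

Lemma has_sumD f g S S' :
  has_sum f S -> has_sum g S' -> has_sum (fun x => f x + g x) (S + S').
Proof.
move=> sumf sumg e e_gt0; have e2_gt0 : 0 < e / 2 by rewrite divr_gt0.
have [F1 near1] := sumf _ e2_gt0; have [F2 near2] := sumg _ e2_gt0.
exists (F1 ++ F2) => F uF sub; rewrite big_split /=.
set a := \sum_(i <- F) f i; set b := \sum_(i <- F) g i.
have -> : a + b - (S + S') = (a - S) + (b - S') by ring.
rewrite splitC; apply: le_lt_trans (ler_normD _ _) (ltrD _ _).
  by apply: near1 => // x x1; apply: sub; rewrite mem_cat x1.
by apply: near2 => // x x2; apply: sub; rewrite mem_cat x2 orbT.
Qed.

Lemma has_sumZ (c : C) f S : has_sum f S -> has_sum (fun x => c * f x) (c * S).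
Proof.
move=> sumf; have [->|c_neq0] := eqVneq c 0.
  by rewrite mul0r; apply: eq_has_sum has_sum0 => x; rewrite mul0r.
set r := complex.Re `|c|.
have r_gt0 : 0 < r by rewrite -ltcR -normC_Re normr_gt0.
move=> e e_gt0; have [F0 near] := sumf _ (divr_gt0 e_gt0 r_gt0).
exists F0 => F uF sub; rewrite -mulr_sumr -mulrBr normrM normC_Re -/r.
have -> : e%:C%C = r%:C%C * (e / r)%:C%C by rewrite -rmorphM /= mulrC divfK ?gt_eqF.
by rewrite ltr_pM2l; [apply: near | rewrite ltcR].
Qed.

Lemma has_sumN f S : has_sum f S -> has_sum (fun x => - f x) (- S).
Proof.
move/(has_sumZ (-1)); rewrite mulN1r; apply: eq_has_sum => x; exact: mulN1r.
Qed.

Lemma has_sum_sum (J : Type) (r : seq J) (F : J -> T -> C) (S : J -> C) :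
  (forall j, has_sum (F j) (S j)) ->
  has_sum (fun x => \sum_(j <- r) F j x) (\sum_(j <- r) S j).
Proof.
move=> sumF; elim: r => [|j r IH].
  by rewrite big_nil; apply: eq_has_sum has_sum0 => x; rewrite big_nil.
by rewrite big_cons; apply: eq_has_sum (has_sumD (sumF j) IH) => x; rewrite big_cons.
Qed.

Lemma csumE f S : has_sum f S -> csum f = S.
Proof.
move=> sumf; apply: (has_sum_unique _ sumf).
exact: (@classical_sets.xgetPex _ 0 (has_sum f) (ex_intro _ S sumf)).
Qed.

End UnconditionalSums.

Section AbsoluteSummability.
Variables (R : realType) (T : eqType).
Local Notation C := R[i].

Definition bounded_sums (h : T -> R) :=
  exists M : R, forall F : seq T, uniq F -> \sum_(x <- F) h x <= M.

Lemma ler_sum_subset (h : T -> R) (F0 F : seq T) :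
  (forall x, 0 <= h x) -> uniq F0 -> uniq F -> {subset F0 <= F} ->
  \sum_(x <- F0) h x <= \sum_(x <- F) h x.
Proof.
move=> h_ge0 uF0 uF sub; rewrite [X in _ <= X](bigID (mem F0)) /=.
have -> : \sum_(x <- F | x \in F0) h x = \sum_(x <- F0) h x.
  rewrite -big_filter; apply/perm_big/uniq_perm; rewrite ?filter_uniq // => x.
  by rewrite mem_filter; case: (boolP (x \in F0)) => // /sub ->.
by rewrite lerDl sumr_ge0.
Qed.

Lemma has_sum_nonneg (h : T -> R) :
  (forall x, 0 <= h x) -> bounded_sums h ->
  exists s : R, has_sum (fun x => (h x)%:C%C) s%:C%C.
Proof.
move=> h_ge0 [M hM].
pose sums : classical_sets.set R :=
  fun r => exists2 F : seq T, uniq F & r = \sum_(x <- F) h x.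
have has_sup_sums : classical_sets.has_sup sums.
  split; first by exists 0, [::]; rewrite ?big_nil.
  by exists M => r [F uF ->]; apply: hM.
exists (sup sums) => e e_gt0.
have [_ [F0 uF0 ->] near] := sup_adherent e_gt0 has_sup_sums.
exists F0 => F uF sub.
have le_F0F := ler_sum_subset h_ge0 uF0 uF sub.
have le_sup : \sum_(x <- F) h x <= sup sums by apply: sup_upper_bound => //; exists F.
have close : `|\sum_(x <- F) h x - sup sums| < e.
  by rewrite ler0_norm ?subr_le0 //; lra.
by rewrite -rmorph_sum -rmorphB normC_real ltcR.
Qed.

Lemma has_sum_dominated (g b : T -> R) :
  (forall x, `|g x| <= b x) -> bounded_sums b ->
  exists S : C, has_sum (fun x => (g x)%:C%C) S.
Proof.
move=> gb [M hM].
have part (g' : T -> R) : (forall x, `|g' x| = `|g x|) -> exists s : R,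
    has_sum (fun x => ((`|g x| + g' x) / 2)%:C%C) s%:C%C.
  move=> eq_norm; have bounds x : - `|g x| <= g' x <= `|g x|.
    by rewrite -ler_norml eq_norm.
  apply: has_sum_nonneg => [x|].
    by have /andP[lo _] := bounds x; apply: divr_ge0 => //; lra.
  exists M => F uF; apply: le_trans (hM F uF); apply: ler_sum => x _.
  have /andP[lo hi] := bounds x; have := gb x; lra.
have [sp sum_pos] := part g (fun=> erefl).
have [sn sum_neg] := part (fun x => - g x) (fun x => normrN _).
exists (sp%:C%C - sn%:C%C); apply: eq_has_sum (has_sumD sum_pos (has_sumN sum_neg)) => x.
by rewrite -rmorphB /=; congr (_%:C%C); field.
Qed.

Lemma normC_Im (z : C) : `|complex.Im z| <= complex.Re `|z|.
Proof.
have := normc_ge_Re (z * 'i%C); rewrite ReiNIm normrN normrM.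
have -> : `|'i%C : C| = 1 by rewrite normc_def /= expr0n expr1n add0r sqrtr1.
by rewrite mulr1 normC_Re lecR.
Qed.

Lemma abs_summable_has_sum (f : T -> C) : abs_summable f -> exists S, has_sum f S.
Proof.
move=> [M hM].
have bounded : bounded_sums (fun x => complex.Re `|f x|).
  exists M => F uF; rewrite -lecR rmorph_sum /=.
  by under eq_bigr do rewrite -normC_Re; apply: hM.
have ReC x : `|complex.Re (f x)| <= complex.Re `|f x|.
  by rewrite -lecR -normC_Re normc_ge_Re.
have [SRe sumRe] := has_sum_dominated ReC bounded.
have [SIm sumIm] := has_sum_dominated (fun x => normC_Im (f x)) bounded.
exists (SRe + 'i%C * SIm).
by apply: eq_has_sum (has_sumD sumRe (has_sumZ 'i%C sumIm)) => x; rewrite -complexE.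
Qed.

End AbsoluteSummability.

Section Regrouping.
Variables (R : realType) (T : eqType).
Local Notation C := R[i].
Implicit Types (f : T -> C).

Definition restrict (Q : pred T) f x : C := if Q x then f x else 0.

Lemma abs_summable_restrict (Q : pred T) f :
  abs_summable f -> abs_summable (restrict Q f).
Proof.
move=> [M hM]; exists M => F uF; apply: le_trans (hM F uF); apply: ler_sum => x _.
by rewrite /restrict; case: ifP; rewrite ?normr0.
Qed.

Lemma abs_summable_csum f : abs_summable f -> has_sum f (csum f).
Proof. by move/abs_summable_has_sum => [S sumf]; rewrite (csumE sumf). Qed.

Lemma csum_partition (K : finType) (key : T -> K) f : abs_summable f ->
  csum f = \sum_(k : K) csum (restrict (fun x => key x == k) f).
Proof.
move=> absf; apply: csumE.
have sum_k k := abs_summable_csum (abs_summable_restrict (fun x => key x == k) absf).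
apply: eq_has_sum (has_sum_sum (index_enum K) sum_k) => x.
rewrite (bigD1 (key x)) //= /restrict eqxx big1 ?addr0 // => k.
by rewrite eq_sym => /negbTE ->.
Qed.

End Regrouping.

Section ComplexExponential.
Variable R : realType.
Local Notation C := R[i].

Lemma expCD (a b : C) : expC (a + b) = expC a * expC b.
Proof.
case: a => a1 a2; case: b => b1 b2; rewrite /expC /= expRD cosD sinD.
by apply/eqP; rewrite eq_complex /=; apply/andP; split; apply/eqP; ring.
Qed.

Lemma expC0 : expC (0 : C) = 1.
Proof.
rewrite /expC /= expR0 cos0 sin0.
by apply/eqP; rewrite eq_complex /=; apply/andP; split; apply/eqP; ring.
Qed.

Lemma expC_neq0 (a : C) : expC a != 0.
Proof.
apply/negP => /eqP expa0.
by have := expCD a (- a); rewrite subrr expC0 expa0 mul0r => /eqP; rewrite oner_eq0.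
Qed.

Lemma expCB (a b : C) : expC (a - b) = expC a / expC b.
Proof. by apply: (mulIf (expC_neq0 b)); rewrite -expCD subrK divfK ?expC_neq0. Qed.

End ComplexExponential.

Lemma sum_mul_exchange (K : comNzRingType) (X : finType) (merge : X -> X -> X)
    (f1 g1 f2 g2 : X -> K) :
  (forall x y, merge (merge x y) (merge y x) = x) ->
  (forall x y, f1 (merge x y) = f1 x) -> (forall x y, f2 (merge x y) = f2 x) ->
  (forall x y, g1 (merge x y) = g1 y) -> (forall x y, g2 (merge x y) = g2 y) ->
  (\sum_x f1 x * g1 x) * (\sum_x f2 x * g2 x) =
  (\sum_x f1 x * g2 x) * (\sum_x f2 x * g1 x).
Proof.
move=> mergeK f1l f2l g1r g2r.
rewrite !mulr_suml; under eq_bigr do rewrite mulr_sumr.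
under [RHS]eq_bigr do rewrite mulr_sumr.
rewrite !pair_bigA /=.
pose swap (p : X * X) := (merge p.1 p.2, merge p.2 p.1).
have swapK : involutive swap by case=> x y; rewrite /swap /= !mergeK.
rewrite (reindex_inj (inv_inj swapK)) /=.
by apply: eq_bigr => -[x y] _ /=; rewrite f1l g1r f2l g2r; ring.
Qed.

Section Factorization.
Variables (R : realType) (V E : finType) (src tgt : E -> V).
Variables (I : E -> finType) (P : V -> finType).
Variable T : forall v : V, P v -> vconf I -> R[i].
Arguments T : clear implicits.
Variable mu : messages R I.
Arguments mu : clear implicits.
Local Notation C := R[i].
Implicit Types (U : {set V}) (F G : {set E}) (Op : operator R P).

Definition pmerge U (x y : pconf P) : pconf P :=
  [ffun v => if v \in U then x v else y v].

Definition vmerge (endpt : E -> V) U (x y : vconf I) : vconf I :=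
  [ffun e => if endpt e \in U then x e else y e].

Lemma pmergeK U x y : pmerge U (pmerge U x y) (pmerge U y x) = x.
Proof. by apply/ffunP => v; rewrite !ffunE; case: (v \in U). Qed.

Lemma vmergeK endpt U x y : vmerge endpt U (vmerge endpt U x y) (vmerge endpt U y x) = x.
Proof. by apply/ffunP => e; rewrite !ffunE; case: (endpt e \in U). Qed.

(* (s', s, kS, kT, bS, bT): the bra and ket physical configurations, then the
   ket bond indices on the src and tgt side of every edge, then the bra ones. *)
Definition netconf := (pconf P * pconf P * vconf I * vconf I * vconf I * vconf I)%type.

Definition nmerge U (x y : netconf) : netconf :=
  let: (s'1, s1, kS1, kT1, bS1, bT1) := x in
  let: (s'2, s2, kS2, kT2, bS2, bT2) := y in
  (pmerge U s'1 s'2, pmerge U s1 s2, vmerge src U kS1 kS2, vmerge tgt U kT1 kT2,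
   vmerge src U bS1 bS2, vmerge tgt U bT1 bT2).

Lemma nmergeK U x y : nmerge U (nmerge U x y) (nmerge U y x) = x.
Proof.
case: x => [[[[[? ?] ?] ?] ?] ?]; case: y => [[[[[? ?] ?] ?] ?] ?].
by rewrite /= !pmergeK !vmergeK.
Qed.

Definition op_at Op (x : netconf) : C := let: (s', s, _, _, _, _) := x in Op s' s.

Definition summand Op (M : edge_insertion R I) (x : netconf) : C :=
  let: (s', s, kS, kT, bS, bT) := x in
    Op s' s
    * (\prod_(v : V) ((T v (s' v) (side src v bS bT))^*)%C)
    * (\prod_(v : V) T v (s v) (side src v kS kT))
    * (\prod_(e : E) M e (kS e) (bS e) (kT e) (bT e)).

Lemma contractE Op M : contract src T Op M = \sum_(x : netconf) summand Op M x.
Proof.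
rewrite /contract !pair_bigA /=.
by apply: eq_bigr => -[[[[[? ?] ?] ?] ?] ?].
Qed.

Definition loop_insertion F : edge_insertion R I :=
  fun e => if e \in F then @Pperp R E I mu e else @Pbp R E I mu e.

Lemma ZtildeE Op F :
  Ztilde src T mu Op F = \sum_(x : netconf) summand Op (loop_insertion F) x.
Proof. exact: contractE. Qed.

Definition edges_avoid U F := forall e, e \in F -> (src e \notin U) && (tgt e \notin U).

Lemma edges_avoid0 U : edges_avoid U set0.
Proof. by move=> e; rewrite inE. Qed.

(* Off F the BP projector is a product of two messages, so the summand splits
   into a factor living on U and one living on its complement. *)
Definition inner_weight U (x : netconf) : C :=
  let: (s', s, kS, kT, bS, bT) := x in
    (\prod_(v in U) ((T v (s' v) (side src v bS bT))^*)%C)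
  * (\prod_(v in U) T v (s v) (side src v kS kT))
  * (\prod_(e | src e \in U) (mu e false (kS e) (bS e) / Imsg mu e))
  * (\prod_(e | tgt e \in U) mu e true (kT e) (bT e)).

Definition outer_weight U F (x : netconf) : C :=
  let: (s', s, kS, kT, bS, bT) := x in
    (\prod_(v | v \notin U) ((T v (s' v) (side src v bS bT))^*)%C)
  * (\prod_(v | v \notin U) T v (s v) (side src v kS kT))
  * (\prod_(e in F) Pperp mu (kS e) (bS e) (kT e) (bT e))
  * (\prod_(e | (e \notin F) && (src e \notin U)) (mu e false (kS e) (bS e) / Imsg mu e))
  * (\prod_(e | (e \notin F) && (tgt e \notin U)) mu e true (kT e) (bT e)).

Lemma summand_split U F Op x : edges_avoid U F ->
  summand Op (loop_insertion F) x = op_at Op x * inner_weight U x * outer_weight U F x.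
Proof.
case: x => [[[[[s' s] kS kT] bS] bT]] avoid /=.
rewrite [\prod_v ((T v _ _)^*)%C](bigID (mem U)) [\prod_v T v _ _](bigID (mem U)) /=.
have edges : \prod_e @loop_insertion F e (kS e) (bS e) (kT e) (bT e) =
  (\prod_(e in F) Pperp mu (kS e) (bS e) (kT e) (bT e)) *
  ((\prod_(e | e \notin F) (mu e false (kS e) (bS e) / Imsg mu e)) *
   \prod_(e | e \notin F) mu e true (kT e) (bT e)).
  rewrite (bigID (mem F)) /=; congr (_ * _).
    by apply: eq_bigr => e; rewrite /loop_insertion => ->.
  rewrite -big_split; apply: eq_bigr => e /negbTE.
  by rewrite /loop_insertion => ->; rewrite /Pbp mulrAC.
rewrite edges (bigID (fun e => src e \in U) (fun e => e \notin F)) /=.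
rewrite (bigID (fun e => tgt e \in U) (fun e => e \notin F)) /=.
have drop_notF (end_in : pred E) (h : E -> C) : (forall e, e \in F -> ~~ end_in e) ->
    \prod_(e | (e \notin F) && end_in e) h e = \prod_(e | end_in e) h e.
  move=> out; apply: eq_bigl => e; case: (boolP (e \in F)) => //= /out.
  by move/negbTE ->.
rewrite (drop_notF (fun e => src e \in U)) => [|e /avoid /andP[] //].
rewrite (drop_notF (fun e => tgt e \in U)) => [|e /avoid /andP[] //].
ring.
Qed.

Hypothesis local : is_local src tgt T.

Lemma T_side_vmerge U v a (b1 b2 c1 c2 : vconf I) :
  T v a (side src v (vmerge src U b1 b2) (vmerge tgt U c1 c2)) =
  if v \in U then T v a (side src v b1 c1) else T v a (side src v b2 c2).
Proof.
by case: ifP => vU; apply: local => e; rewrite /incident !ffunE;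
  case: eqP => [-> _|_ /eqP ->]; rewrite vU.
Qed.

Lemma inner_weight_merge U x y : inner_weight U (nmerge U x y) = inner_weight U x.
Proof.
case: x => [[[[[? ?] ?] ?] ?] ?]; case: y => [[[[[? ?] ?] ?] ?] ?] /=.
congr (_ * _ * _ * _); apply: eq_bigr => i iU;
  by rewrite ?T_side_vmerge !ffunE iU.
Qed.

Lemma outer_weight_merge U F x y :
  edges_avoid U F -> outer_weight U F (nmerge U x y) = outer_weight U F y.
Proof.
case: x => [[[[[? ?] ?] ?] ?] ?]; case: y => [[[[[? ?] ?] ?] ?] ?] /= avoid.
congr (_ * _ * _ * _ * _).
- by apply: eq_bigr => v /negbTE vU; rewrite T_side_vmerge ffunE vU.
- by apply: eq_bigr => v /negbTE vU; rewrite T_side_vmerge ffunE vU.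
- by apply: eq_bigr => e /avoid /andP[/negbTE srcU /negbTE tgtU]; rewrite !ffunE srcU tgtU.
- by apply: eq_bigr => e /andP[_ /negbTE eU]; rewrite !ffunE eU.
- by apply: eq_bigr => e /andP[_ /negbTE eU]; rewrite !ffunE eU.
Qed.

Definition depends_on (W : {set V}) Op :=
  forall s' s t' t : pconf P, (forall v, v \in W -> s' v = t' v /\ s v = t v) ->
    Op s' s = Op t' t.

Lemma op_at_mergel U Op x y : depends_on U Op -> op_at Op (nmerge U x y) = op_at Op x.
Proof.
case: x => [[[[[? ?] ?] ?] ?] ?]; case: y => [[[[[? ?] ?] ?] ?] ?] dep /=.
by apply: dep => v vU; rewrite !ffunE vU.
Qed.

Lemma op_at_merger U Op x y : depends_on (~: U) Op -> op_at Op (nmerge U x y) = op_at Op y.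
Proof.
case: x => [[[[[? ?] ?] ?] ?] ?]; case: y => [[[[[? ?] ?] ?] ?] ?] dep /=.
by apply: dep => v; rewrite inE => /negbTE vU; rewrite !ffunE vU.
Qed.

Definition op_pmul Op Op' : operator R P := fun s' s => Op s' s * Op' s' s.

(* Swapping the U-halves of two summands is a bijection that exchanges the
   U-parts of the two operators and of the two networks. *)
Lemma Ztilde_exchange U F G (o1 o1' o2 o2' : operator R P) :
  edges_avoid U F -> edges_avoid U G ->
  depends_on U o1 -> depends_on (~: U) o1' -> depends_on U o2 -> depends_on (~: U) o2' ->
  Ztilde src T mu (op_pmul o1 o1') F * Ztilde src T mu (op_pmul o2 o2') G =
  Ztilde src T mu (op_pmul o1 o2') G * Ztilde src T mu (op_pmul o2 o1') F.
Proof.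
move=> avF avG d1 d1' d2 d2'; rewrite !ZtildeE.
have factor o o' H x : edges_avoid U H -> summand (op_pmul o o') (loop_insertion H) x =
    (op_at o x * inner_weight U x) * (op_at o' x * outer_weight U H x).
  move=> avH; rewrite (summand_split _ x avH).
  by case: x => [[[[[? ?] ?] ?] ?] ?]; rewrite /= /op_pmul; ring.
under [X in X * _ = _]eq_bigr do rewrite (factor o1 o1' F _ avF).
under [X in _ * X = _]eq_bigr do rewrite (factor o2 o2' G _ avG).
under [X in _ = X * _]eq_bigr do rewrite (factor o1 o2' G _ avG).
under [X in _ = _ * X]eq_bigr do rewrite (factor o2 o1' F _ avF).
apply: (sum_mul_exchange (merge := nmerge U)) => [|x y|x y|x y|x y].
- exact: nmergeK.
- by rewrite op_at_mergel // inner_weight_merge.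
- by rewrite op_at_mergel // inner_weight_merge.
- by rewrite op_at_merger // outer_weight_merge.
- by rewrite op_at_merger // outer_weight_merge.
Qed.

End Factorization.

Section PhysicalOperators.
Variables (R : realType) (V : finType) (P : V -> finType).
Implicit Types (U W X : {set V}) (Op : operator R P).

Definition op_diag W : operator R P :=
  fun s' s => [forall v in W, s' v == s v]%:R.

(* The factor of Op acting on W: its bra is taken from s' on W and from s off W. *)
Definition op_part W Op : operator R P := fun s' s => Op (pmerge W s' s) s.

Lemma pconf_neq (p q : pconf P) : p != q -> exists v, p v != q v.
Proof.
move=> pq; apply/existsP; apply: contraNT pq => /existsPn same.
by apply/eqP/ffunP => v; apply/eqP/negPn/same.
Qed.

Lemma supported_on_eq X Op (p' p q' q : pconf P) : supported_on X Op ->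
  (forall v, v \in X -> p' v = q' v /\ p v = q v) ->
  (forall v, v \notin X -> (p' v = p v <-> q' v = q v)) -> Op p' p = Op q' q.
Proof.
move=> [off_diag local] onX offX.
have [diag|] := boolP [forall v, (v \notin X) ==> (p' v == p v)].
  apply: local => // v vX; have /implyP/(_ vX)/eqP eqv := forallP diag v.
  by split => //; apply/(offX v vX).
rewrite negb_forall => /existsP[v]; rewrite negb_imply => /andP[vX ne].
rewrite (off_diag p' p) ?(off_diag q' q) //; exists v => //.
by apply/eqP => eqv; move/eqP: ne; apply; apply/(offX v vX).
Qed.

Lemma depends_on_op_part X W Op :
  supported_on X Op -> X \subset W -> depends_on W (op_part W Op).
Proof.
move=> suppOp XW s' s t' t onW; apply: (supported_on_eq suppOp) => v;
  rewrite !ffunE.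
  by move=> vX; rewrite (subsetP XW v vX); apply: onW; apply: (subsetP XW).
by move=> _; case: (boolP (v \in W)) => // vW; have [-> ->] := onW v vW.
Qed.

Lemma depends_on_op_diag W : depends_on W (op_diag W).
Proof.
move=> s' s t' t onW; congr (nat_of_bool _)%:R.
apply/forall_inP/forall_inP => same v vW; have [eq_bra eq_ket] := onW v vW.
  by rewrite -eq_bra -eq_ket same.
by rewrite eq_bra eq_ket same.
Qed.

Lemma op_pmulC Op Op' : op_pmul Op Op' = op_pmul Op' Op.
Proof. by apply: funext => s'; apply: funext => s; rewrite /op_pmul mulrC. Qed.

Lemma op_pmul_part_diag X W Op : supported_on X Op -> X \subset W ->
  op_pmul (op_part W Op) (op_diag (~: W)) = Op.
Proof.
move=> suppOp XW; apply: funext => s'; apply: funext => s; rewrite /op_pmul /op_diag.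
have [/forall_inP diag|] := boolP [forall v in ~: W, s' v == s v].
  rewrite mulr1 /op_part; congr (Op _ s); apply/ffunP => v; rewrite ffunE.
  by case: ifPn => // vW; apply/esym/eqP/diag; rewrite inE.
rewrite negb_forall_in => /existsP[v]; rewrite inE => /andP[vW ne]; rewrite mulr0.
apply/esym/(proj1 suppOp); exists v => //.
by apply: contra vW; apply: (subsetP XW).
Qed.

Lemma op_pmul_diag_part X W Op : supported_on X Op -> X \subset ~: W ->
  op_pmul (op_diag W) (op_part (~: W) Op) = Op.
Proof.
by move=> suppOp XW; rewrite op_pmulC -{2}(setCK W) (op_pmul_part_diag suppOp XW).
Qed.

Lemma op_part_id W : op_part W (@op_id R V P) = op_diag W.
Proof.
apply: funext => s'; apply: funext => s; rewrite /op_part /op_id /op_diag.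
congr (nat_of_bool _)%:R; apply/eqP/forall_inP => [merged v vW | same].
  by have := congr1 (fun p : pconf P => p v) merged; rewrite /= ffunE vW => ->.
by apply/ffunP => v; rewrite ffunE; case: ifP => // /same/eqP.
Qed.

Lemma op_id_supported : supported_on set0 (@op_id R V P).
Proof.
split=> [s' s [v _ ne] | s' s t' t _ off].
  by rewrite /op_id; case: eqP => // eqs; move: ne; rewrite eqs eqxx.
have eq_off (p q : pconf P) : (forall v, v \notin set0 -> p v = q v) -> p = q.
  by move=> eqv; apply/ffunP => v; apply: eqv; rewrite inE.
by rewrite /op_id (eq_off s' s) 1?(eq_off t' t) ?eqxx // => v /off[].
Qed.

Lemma op_id_pmul_diag W : op_pmul (op_diag W) (op_diag (~: W)) = @op_id R V P.
Proof. by rewrite -op_part_id (op_pmul_part_diag op_id_supported) ?sub0set. Qed.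

Lemma op_mul_pmul_part U (X1 X2 : {set V}) (O1 O2 : operator R P) :
  supported_on X1 O1 -> supported_on X2 O2 -> X1 \subset U -> X2 \subset ~: U ->
  op_mul O1 O2 = op_pmul (op_part U O1) (op_part (~: U) O2).
Proof.
move=> supp1 supp2 X1U X2U; apply: funext => s'; apply: funext => s.
rewrite /op_mul (bigD1 (pmerge U s s')) //= big1 ?addr0 => [|t /pconf_neq[v]].
  rewrite /op_pmul /op_part; congr (_ * _).
    apply: (supported_on_eq supp1) => v; rewrite !ffunE; last by case: (v \in U).
    by move/(subsetP X1U) ->.
  by congr (O2 _ s); apply/ffunP => v; rewrite !ffunE inE; case: (v \in U).
rewrite ffunE; case: (boolP (v \in U)) => vU ne.
  rewrite (proj1 supp2 t s) ?mulr0 //; exists v => //.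
  by apply: contraL vU => /(subsetP X2U); rewrite inE.
rewrite (proj1 supp1 s' t) ?mul0r //; exists v; last by rewrite eq_sym.
by apply: contra vU; apply: (subsetP X1U).
Qed.

End PhysicalOperators.

Section LoopRatios.
Variables (R : realType) (V E : finType) (src tgt : E -> V).
Variables (I : E -> finType) (P : V -> finType).
Variable T : forall v : V, P v -> vconf I -> R[i].
Variable mu : messages R I.
Hypothesis local : is_local src tgt T.
Local Notation Zbp := (ZBP src T mu).
Local Notation Oid := (@op_id R V P).

Section Split.
Variables (U X1 X2 : {set V}) (O1 O2 : operator R P).
Hypotheses (supp1 : supported_on X1 O1) (supp2 : supported_on X2 O2).
Hypotheses (X1U : X1 \subset U) (X2U : X2 \subset ~: U).
Let O12 := op_pmul (op_part U O1) (op_part (~: U) O2).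

Let dep1 : depends_on U (op_part U O1). Proof. exact: depends_on_op_part supp1 X1U. Qed.
Let dep2 : depends_on (~: U) (op_part (~: U) O2).
Proof. exact: depends_on_op_part supp2 X2U. Qed.

Lemma ZBP_pmul_part : Zbp O12 * Zbp Oid = Zbp O1 * Zbp O2.
Proof.
rewrite /ZBP -(op_id_pmul_diag _ _ U).
rewrite (Ztilde_exchange mu local (edges_avoid0 src tgt U) (edges_avoid0 src tgt U)
  dep1 dep2 (@depends_on_op_diag R V P U) (@depends_on_op_diag R V P (~: U))).
by rewrite (op_pmul_part_diag supp1 X1U) (op_pmul_diag_part supp2 X2U).
Qed.

Lemma Zloop_pmul_part l : edges_avoid src tgt U l ->
  Zbp O12 != 0 -> Zbp O2 != 0 -> Zloop src T mu O12 l = Zloop src T mu O2 l.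
Proof.
move=> avoid nz12 nz2; apply/eqP; rewrite /Zloop eqr_div //; apply/eqP.
have := Ztilde_exchange mu local avoid (edges_avoid0 src tgt U) dep1 dep2
  (@depends_on_op_diag R V P U) dep2.
by rewrite (op_pmul_diag_part supp2 X2U) => ->; rewrite mulrC.
Qed.

End Split.

Lemma ZBP_op_mul (U X1 X2 : {set V}) (O1 O2 : operator R P) :
  supported_on X1 O1 -> supported_on X2 O2 -> X1 \subset U -> X2 \subset ~: U ->
  Zbp (op_mul O1 O2) * Zbp Oid = Zbp O1 * Zbp O2.
Proof.
move=> supp1 supp2 X1U X2U; rewrite (op_mul_pmul_part supp1 supp2 X1U X2U).
exact: (ZBP_pmul_part supp1 supp2 X1U X2U).
Qed.

Lemma Zloop_mul_avoid_l (U X1 X2 : {set V}) (O1 O2 : operator R P) l :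
  supported_on X1 O1 -> supported_on X2 O2 -> X1 \subset U -> X2 \subset ~: U ->
  edges_avoid src tgt U l -> Zbp (op_mul O1 O2) != 0 -> Zbp O2 != 0 ->
  Zloop src T mu (op_mul O1 O2) l = Zloop src T mu O2 l.
Proof.
move=> supp1 supp2 X1U X2U; rewrite (op_mul_pmul_part supp1 supp2 X1U X2U).
exact: (Zloop_pmul_part supp1 supp2 X1U X2U).
Qed.

Lemma Zloop_mul_avoid_r (U X1 X2 : {set V}) (O1 O2 : operator R P) l :
  supported_on X1 O1 -> supported_on X2 O2 -> X1 \subset ~: U -> X2 \subset U ->
  edges_avoid src tgt U l -> Zbp (op_mul O1 O2) != 0 -> Zbp O1 != 0 ->
  Zloop src T mu (op_mul O1 O2) l = Zloop src T mu O1 l.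
Proof.
move=> supp1 supp2 X1U X2U.
rewrite (op_mul_pmul_part supp1 supp2 X1U (_ : X2 \subset ~: ~: U)) ?setCK // op_pmulC.
exact: (Zloop_pmul_part supp2 supp1 X2U X1U).
Qed.

Lemma Zloop_avoid_op_id (U X : {set V}) (Op : operator R P) l :
  supported_on X Op -> X \subset U -> edges_avoid src tgt U l ->
  Zbp Op != 0 -> Zbp Oid != 0 -> Zloop src T mu Op l = Zloop src T mu Oid l.
Proof.
move=> suppOp XU; have := Zloop_pmul_part suppOp (op_id_supported R P) XU (sub0set _) (l := l).
by rewrite op_part_id (op_pmul_part_diag suppOp XU).
Qed.

End LoopRatios.

Lemma connect_map (X Y : finType) (f : X -> Y) (e : rel X) (e' : rel Y) :
  (forall x y, e x y -> connect e' (f x) (f y)) ->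
  forall x y, connect e x y -> connect e' (f x) (f y).
Proof.
move=> step x y /connectP[p]; elim: p x => [|z p IH] x /= => [_ -> //|/andP[exz pz] ly].
exact: connect_trans (step _ _ exz) (IH _ pz ly).
Qed.

Section Clusters.
Variables (V E : finType) (src tgt : E -> V).

Lemma tag_in_loopset (W : cluster E) (x : ivert W) : tag x \in loopset W.
Proof. by case: x => l i; rewrite inE (leq_ltn_trans (leq0n i) (ltn_ord i)). Qed.

Lemma gamma_connected_loopset (W : cluster E) :
  cluster_connected src tgt W -> gamma_connected src tgt (loopset W).
Proof.
move=> conn; apply/forall_inP => l /[dup] lW; rewrite inE => Wl_gt0.
apply/forall_inP => l' /[dup] l'W; rewrite inE => Wl'_gt0.
pose x : ivert W := Tagged (fun l => 'I_(W l)) (Ordinal Wl_gt0).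
pose y : ivert W := Tagged (fun l => 'I_(W l)) (Ordinal Wl'_gt0).
apply: (connect_map (f := tag) _ (forallP (forallP conn x) y)) => {x y} x y.
case: (eqVneq (tag x) (tag y)) => [-> _|neq]; first exact: connect0.
rewrite /iadj (negbTE neq) /= => /andP[_ incompat]; apply: connect1.
by rewrite !tag_in_loopset neq.
Qed.

Lemma edges_avoid_suppG (Gam : {set {set E}}) (S : {set V}) l :
  suppG src tgt Gam :&: S = set0 -> l \in Gam -> edges_avoid src tgt S l.
Proof.
move=> disj lGam e el.
have offS v : incident src tgt v e -> v \notin S.
  move=> inc; apply: contra_eqN disj => vS; apply/set0Pn; exists v.
  rewrite inE vS andbT; apply/bigcupP; exists l => //.
  by rewrite inE; apply/existsP; exists e; rewrite el.
by rewrite !offS // /incident eqxx ?orbT.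
Qed.

Variables (R : realType) (I : E -> finType) (P : V -> finType).
Variable T : forall v : V, P v -> vconf I -> R[i].
Variable mu : messages R I.

Lemma eq_Zcluster (O1 O2 : operator R P) (W : cluster E) :
  (forall l, 0 < W l -> Zloop src T mu O1 l = Zloop src T mu O2 l)%N ->
  Zcluster src T mu O1 W = Zcluster src T mu O2 W.
Proof.
move=> eqZ; apply: eq_bigr => l _.
by case: (posnP (W l)) => [->|/eqZ ->]; rewrite ?expr0.
Qed.

End Clusters.

Section Correlator.
Variables (R : realType) (V E : finType) (src tgt : E -> V).
Variables (I : E -> finType) (P : V -> finType).
Variable T : forall v : V, P v -> vconf I -> R[i].
Variables (mu : messages R I) (SA SB : {set V}) (OA OB : operator R P).
Hypotheses (local : is_local src tgt T) (disjAB : [disjoint SA & SB]).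
Hypotheses (suppA : supported_on SA OA) (suppB : supported_on SB OB).
Local Notation C := R[i].
Local Notation Oid := (@op_id R V P).
Local Notation OAB := (op_mul OA OB).
Local Notation Zbp := (ZBP src T mu).
Local Notation Zl := (Zloop src T mu).
Local Notation cl := (cl_term src tgt SA SB T mu).
Local Notation K := (Kfrak src tgt SA SB T mu).
Hypotheses (nz0 : Zbp Oid != 0) (nzA : Zbp OA != 0) (nzB : Zbp OB != 0).
Hypothesis nzAB : Zbp OAB != 0.

Let SB_offA : SB \subset ~: SA.
Proof. by apply/subsetP => v vB; rewrite inE (disjointFl disjAB vB). Qed.

Let SA_offB : SA \subset ~: SB.
Proof. by apply/subsetP => v vA; rewrite inE (disjointFr disjAB vA). Qed.

Lemma ZBP_mul_disjoint : Zbp OAB * Zbp Oid = Zbp OA * Zbp OB.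
Proof. exact: (ZBP_op_mul mu local suppA suppB (subxx SA) SB_offA). Qed.

Lemma Zloop_avoid_A l : edges_avoid src tgt SA l -> Zl OAB l = Zl OB l /\ Zl OA l = Zl Oid l.
Proof.
move=> avoid; split.
  exact: (Zloop_mul_avoid_l local suppA suppB (subxx SA) SB_offA avoid nzAB nzB).
exact: (Zloop_avoid_op_id local suppA (subxx SA) avoid nzA nz0).
Qed.

Lemma Zloop_avoid_B l : edges_avoid src tgt SB l -> Zl OAB l = Zl OA l /\ Zl OB l = Zl Oid l.
Proof.
move=> avoid; split.
  exact: (Zloop_mul_avoid_r local suppA suppB SA_offB (subxx SB) avoid nzAB nzA).
exact: (Zloop_avoid_op_id local suppB (subxx SB) avoid nzB nz0).
Qed.

(* If every loop of W misses A then Z^AB_W = Z^B_W and Z^A_W = Z_W, so the four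
   terms cancel in pairs; symmetrically for B. *)
Lemma cl_term_comb_eq0 (W : cluster E) : ~~ gamma_ok src tgt SA SB (loopset W) ->
  cl OAB W + cl Oid W - cl OA W - cl OB W = 0.
Proof.
rewrite /cl_term => nok.
destruct (pselect (is_cluster src tgt SA SB W /\ cluster_connected src tgt W))
  as [[[loops ?] conn]|?]; rewrite /=; last by rewrite !subr0 addr0.
have all_loops : [forall l in loopset W, is_loop src tgt SA SB l].
  by apply/forall_inP => l; rewrite inE; apply: loops.
move: nok; rewrite /gamma_ok all_loops gamma_connected_loopset //= negb_and !negbK.
have avoid S l : suppG src tgt (loopset W) :&: S = set0 -> (0 < W l)%N ->
    edges_avoid src tgt S l.
  by move=> miss Wl; apply: edges_avoid_suppG miss _; rewrite inE.
case/orP => /eqP miss.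
  rewrite (eq_Zcluster (O2 := OB)) => [|l /(avoid _ _ miss)/Zloop_avoid_A[-> _] //].
  rewrite (eq_Zcluster (O1 := OA) (O2 := Oid)) => [|l /(avoid _ _ miss)/Zloop_avoid_A[_ ->] //].
  by ring.
rewrite (eq_Zcluster (O2 := OA)) => [|l /(avoid _ _ miss)/Zloop_avoid_B[-> _] //].
rewrite (eq_Zcluster (O1 := OB) (O2 := Oid)) => [|l /(avoid _ _ miss)/Zloop_avoid_B[_ ->] //].
by ring.
Qed.

Hypotheses (absAB : abs_summable (cl OAB)) (abs0 : abs_summable (cl Oid)).
Hypotheses (absA : abs_summable (cl OA)) (absB : abs_summable (cl OB)).

Lemma Kfrak_comb_eq0 Gam : ~~ gamma_ok src tgt SA SB Gam ->
  K OAB Gam + K Oid Gam - K OA Gam - K OB Gam = 0.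
Proof.
move=> nok; pose restr Op := restrict (fun W => loopset W == Gam) (cl Op).
have sumK Op : abs_summable (cl Op) -> has_sum (restr Op) (K Op Gam).
  by move=> absOp; apply: abs_summable_csum; apply: abs_summable_restrict.
have := has_sumD (has_sumD (has_sumD (sumK _ absAB) (sumK _ abs0))
  (has_sumN (sumK _ absA))) (has_sumN (sumK _ absB)).
move/has_sum_unique; apply; apply: eq_has_sum (has_sum0 _) => W.
rewrite /restr /restrict; case: eqP => [eqGam|_]; last by rewrite !subr0 addr0.
by rewrite cl_term_comb_eq0 // eqGam.
Qed.

Lemma sum_Kfrak_gamma_ok :
  \sum_(Gam | gamma_ok src tgt SA SB Gam) (K OAB Gam + K Oid Gam - K OA Gam - K OB Gam) =
  csum (cl OAB) + csum (cl Oid) - csum (cl OA) - csum (cl OB).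
Proof.
have regroup Op : abs_summable (cl Op) -> csum (cl Op) = \sum_Gam K Op Gam.
  by move=> absOp; rewrite (csum_partition (@loopset E) absOp).
rewrite (regroup _ absAB) (regroup _ abs0) (regroup _ absA) (regroup _ absB).
rewrite -big_split -!sumrB /= [RHS](bigID (gamma_ok src tgt SA SB)) /=.
by rewrite [X in _ + X]big1 ?addr0 // => Gam; apply: Kfrak_comb_eq0.
Qed.

Lemma correlator_expC (cAB c0 cA cB : C) :
  Znet src T OAB = Zbp OAB * expC cAB -> Znet src T Oid = Zbp Oid * expC c0 ->
  Znet src T OA = Zbp OA * expC cA -> Znet src T OB = Zbp OB * expC cB ->
  correlator src T OA OB =
    expval src T OA * expval src T OB * (expC (cAB + c0 - cA - cB) - 1).
Proof.
move=> ZAB Z0 ZA ZB; rewrite /correlator /expval ZAB Z0 ZA ZB !expCB expCD.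
have -> : Zbp OAB = Zbp OA * Zbp OB / Zbp Oid by rewrite -ZBP_mul_disjoint mulfK.
by field; rewrite nz0 !expC_neq0.
Qed.

End Correlator.

Theorem mainTheorem9 (R : realType) (V E : finType) (src tgt : E -> V)
    (I : E -> finType) (P : V -> finType)
    (T : forall v : V, P v -> vconf I -> R[i])
    (mu : messages R I)
    (SA SB : {set V}) (OA OB : operator R P) :
  simple_graph src tgt ->
  is_local src tgt T ->
  [disjoint SA & SB] ->
  supported_on SA OA ->
  supported_on SB OB ->
  0 < Znet src T (@op_id R V P) ->
  bp_fixed_point src tgt T mu ->
  (* ratio-version correlator expansion hypotheses *)
  ZBP src T mu (@op_id R V P) != 0 ->
  ZBP src T mu OA != 0 ->
  ZBP src T mu OB != 0 ->
  ZBP src T mu (op_mul OA OB) != 0 ->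
  expval src T OA != 0 ->
  expval src T OB != 0 ->
  cluster_expansion src tgt SA SB T mu (@op_id R V P) ->
  cluster_expansion src tgt SA SB T mu OA ->
  cluster_expansion src tgt SA SB T mu OB ->
  cluster_expansion src tgt SA SB T mu (op_mul OA OB) ->
  correlator src T OA OB =
    expval src T OA * expval src T OB *
    (expC (\sum_(Gam : {set {set E}} | gamma_ok src tgt SA SB Gam)
             (Kfrak src tgt SA SB T mu (op_mul OA OB) Gam
              + Kfrak src tgt SA SB T mu (@op_id R V P) Gam
              - Kfrak src tgt SA SB T mu OA Gam
              - Kfrak src tgt SA SB T mu OB Gam)) - 1).
Proof.
move=> _ local disjAB suppA suppB _ _ nz0 nzA nzB nzAB _ _
  [abs0 Z0] [absA ZA] [absB ZB] [absAB ZAB].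
rewrite (sum_Kfrak_gamma_ok local disjAB suppA suppB nz0 nzA nzB nzAB absAB abs0 absA absB).
exact: (correlator_expC local disjAB suppA suppB nz0 ZAB Z0 ZA ZB).
Qed.
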